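(* Let $\mathcal{C}$ be a category and let $\mathbf{Ff}_{\mathcal{C}}$ be the category of functorial factorisations on $\mathcal{C}$, equipped with the two strict monoidal structures $(\otimes, I)$ and $(\odot,\bot)$ described below. Then $(\mathbf{Ff}_{\mathcal{C}}, \otimes, I, \odot, \bot)$ can be made into a strict 2-fold monoidal category, i.e. there exist maps $m\colon \bot\otimes\bot\to\bot$, $c\colon I\to I\odot I$, $j\colon I\to \bot$ making $(\bot,j,m)$ a $\otimes$-monoid and $(I,j,c)$ a $\odot$-comonoid, and a family of maps $z_{A,B,C,D}\colon (A\odot B)\otimes(C\odot D)\to (A\otimes C)\odot(B\otimes D)$ natural in $A,B,C,D$, satisfying the coherence laws of a strict 2-fold monoidal category.
   Context: $\mathcal{C}^{\mathbf 2}$ denotes the arrow category of $\mathcal{C}$: objects are morphisms $f\colon X\to Y$ of $\mathcal{C}$; a morphism $(h,k)\colon f\to g$ (with $g\colon W\to Z$) is a pair $h\colon X\to W$, $k\colon Y\to Z$ with $gh=kf$. $\mathrm{dom},\mathrm{cod}\colon \mathcal{C}^{\mathbf 2}\to\mathcal{C}$ are the domain and codomain functors and $\kappa\colon\mathrm{dom}\Rightarrow\mathrm{cod}$ has $\kappa_f=f$. A functorial factorisation $(E,\lambda,\rho)$ is a functor $E\colon\mathcal{C}^{\mathbf 2}\to\mathcal{C}$ with natural transformations $\lambda\colon\mathrm{dom}\Rightarrow E$, $\rho\colon E\Rightarrow\mathrm{cod}$ such that $\rho_f\lambda_f=f$ for all $f$; so $f\colon X\to Y$ factors as $X\xrightarrow{\lambda_f}Ef\xrightarrow{\rho_f}Y$.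 A morphism $\alpha\colon(E,\lambda,\rho)\to(E',\lambda',\rho')$ in $\mathbf{Ff}_{\mathcal{C}}$ is a natural transformation $\alpha\colon E\Rightarrow E'$ with $\alpha\lambda=\lambda'$ and $\rho'\alpha=\rho$. The tensor $(E',\lambda',\rho')\otimes(E,\lambda,\rho)$ factorises $f$ as $X\xrightarrow{\lambda'_{\rho_f}\lambda_f}E'(\rho_f)\xrightarrow{\rho'_{\rho_f}}Y$; its unit $I=(\mathrm{dom},1_{\mathrm{dom}},\kappa)$ (the initial object of $\mathbf{Ff}_{\mathcal{C}}$). The tensor $(E',\lambda',\rho')\odot(E,\lambda,\rho)$ factorises $f$ as $X\xrightarrow{\lambda'_{\lambda_f}}E'(\lambda_f)\xrightarrow{\rho_f\rho'_{\lambda_f}}Y$; its unit is $\bot=(\mathrm{cod},\kappa,1_{\mathrm{cod}})$ (the terminal object). On morphisms $\alpha\colon(E,\lambda,\rho)\to(F,\mu,\nu)$, $\beta\colon(E',\lambda',\rho')\to(F',\mu',\nu')$: $(\beta\otimes\alpha)_f=\beta_{\nu_f}\circ E'(\alpha_f,1_Y)$ and $(\beta\odot\alpha)_f=\beta_{\mu_f}\circ E'(1_X,\alpha_f)$. A strict 2-fold monoidal category is a monoid in the category of strict monoidal categories and lax monoidal functors; explicitly it is a category with two strict monoidal structures and data $m,c,j,z$ as in the claim, subject to six coherence laws equating the two canonical composites $(A\odot B\odot C)\otimes(A'\odot B'\odot C')\to(A\otimes A')\odot(B\otimes B')\odot(C\otimes C')$, $(A\odot A')\otimes(B\odot B')\otimes(C\odot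 C')\to(A\otimes B\otimes C)\odot(A'\otimes B'\otimes C')$, $(A\odot B)\otimes I\to(A\otimes I)\odot(B\otimes I)$, $I\otimes(A\odot B)\to(I\otimes A)\odot(I\otimes B)$, $(\bot\odot A)\otimes(\bot\odot B)\to\bot\odot(A\otimes B)$, $(A\odot\bot)\otimes(B\odot\bot)\to(A\otimes B)\odot\bot$. *)

From Stdlib Require Import ProofIrrelevance.

Set Implicit Arguments.
Unset Strict Implicit.
Set Primitive Projections.

(* A category; hom-sets are types, equality of morphisms is Leibniz equality.
   [ccomp g f] is the composite g ∘ f. *)
Record Category := {
  Obj :> Type;
  Hom : Obj -> Obj -> Type;
  cid : forall X, Hom X X;
  ccomp : forall X Y Z, Hom Y Z -> Hom X Y -> Hom X Z;
  ccomp_assoc : forall X Y Z W (h : Hom Z W) (g : Hom Y Z) (f : Hom X Y),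
      ccomp h (ccomp g f) = ccomp (ccomp h g) f;
  cid_left : forall X Y (f : Hom X Y), ccomp (cid Y) f = f;
  cid_right : forall X Y (f : Hom X Y), ccomp f (cid X) = f }.

Arguments Hom {C} : rename.
Arguments cid {C} X : rename.
Arguments ccomp {C X Y Z} : rename.
Arguments ccomp_assoc {C X Y Z W} : rename.
Arguments cid_left {C X Y} : rename.
Arguments cid_right {C X Y} : rename.

Section FunctorialFactorisations.
Variable C : Category.

Record Arr := mkArr { adom : Obj C; acod : Obj C; aarr : Hom adom acod }.

Record ArrHom (a b : Arr) := mkArrHom {
  ah_top : Hom (adom a) (adom b);
  ah_bot : Hom (acod a) (acod b);
  ah_comm : ccomp (aarr b) ah_top = ccomp ah_bot (aarr a) }.

Lemma ArrHom_eq a b (u v : ArrHom a b) :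
  ah_top u = ah_top v -> ah_bot u = ah_bot v -> u = v.
Proof.
  destruct u as [t1 b1 p1], v as [t2 b2 p2]; simpl; intros -> ->.
  f_equal; apply proof_irrelevance.
Qed.

Definition arrh_id (a : Arr) : ArrHom a a.
Proof.
  refine (@mkArrHom a a (cid _) (cid _) _).
  now rewrite cid_left, cid_right.
Defined.

Definition arrh_comp (a b c : Arr) (v : ArrHom b c) (u : ArrHom a b) : ArrHom a c.
Proof.
  refine (@mkArrHom a c (ccomp (ah_top v) (ah_top u)) (ccomp (ah_bot v) (ah_bot u)) _).
  rewrite ccomp_assoc, (ah_comm v), <- ccomp_assoc, (ah_comm u), ccomp_assoc.
  reflexivity.
Defined.

Record Ff := mkFf {
  F_obj :> Arr -> Obj C;
  F_mor : forall a b, ArrHom a b -> Hom (F_obj a) (F_obj b);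
  F_id : forall a, F_mor (arrh_id a) = cid _;
  F_comp : forall a b c (v : ArrHom b c) (u : ArrHom a b),
      F_mor (arrh_comp v u) = ccomp (F_mor v) (F_mor u);
  F_lam : forall a, Hom (adom a) (F_obj a);
  F_rho : forall a, Hom (F_obj a) (acod a);
  F_lam_nat : forall a b (u : ArrHom a b),
      ccomp (F_lam b) (ah_top u) = ccomp (F_mor u) (F_lam a);
  F_rho_nat : forall a b (u : ArrHom a b),
      ccomp (F_rho b) (F_mor u) = ccomp (ah_bot u) (F_rho a);
  F_rho_lam : forall a, ccomp (F_rho a) (F_lam a) = aarr a }.

Arguments F_mor f {a b}.

Record FfHom (E E' : Ff) := mkFfHom {
  fh :> forall a, Hom (E a) (E' a);
  fh_nat : forall a b (u : ArrHom a b),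
      ccomp (fh b) (F_mor E u) = ccomp (F_mor E' u) (fh a);
  fh_lam : forall a, ccomp (fh a) (F_lam E a) = F_lam E' a;
  fh_rho : forall a, ccomp (F_rho E' a) (fh a) = F_rho E a }.

Definition ffid (E : Ff) : FfHom E E.
Proof.
  refine (@mkFfHom E E (fun a => cid _) _ _ _); intros.
  - now rewrite cid_left, cid_right.
  - apply cid_left.
  - apply cid_right.
Defined.

Definition ffcomp (E F G : Ff) (b : FfHom F G) (a : FfHom E F) : FfHom E G.
Proof.
  refine (@mkFfHom E G (fun x => ccomp (b x) (a x)) _ _ _); intros.
  - rewrite <- ccomp_assoc, fh_nat, ccomp_assoc, fh_nat, ccomp_assoc; reflexivity.
  - rewrite <- ccomp_assoc, fh_lam, fh_lam; reflexivity.
  - rewrite ccomp_assoc, fh_rho, fh_rho; reflexivity.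
Defined.

(* Equality of morphisms between (strictly) equal objects of Ff_C:
   f : A -> B and g : A' -> B' are equal if A = A', B = B' and f,
   transported along these identifications, equals g. *)
Definition hom_cast (A B A' B' : Ff) (eA : A = A') (eB : B = B') (f : FfHom A B)
  : FfHom A' B' :=
  match eA in _ = X return FfHom X B' with
  | eq_refl => match eB in _ = Y return FfHom A Y with eq_refl => f end
  end.

Definition hom_eq (A B A' B' : Ff) (f : FfHom A B) (g : FfHom A' B') : Prop :=
  exists (eA : A = A') (eB : B = B'), hom_cast eA eB f = g.

Definition ff_I : Ff.
Proof.
  refine (@mkFf adom (fun a b u => ah_top u) (fun a => eq_refl) (fun a b c v u => eq_refl)
            (fun a => cid _) aarr _ _ _); intros.
  - now rewrite cid_left, cid_right.
  - apply ah_comm.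
  - apply cid_right.
Defined.

Definition ff_bot : Ff.
Proof.
  refine (@mkFf acod (fun a b u => ah_bot u) (fun a => eq_refl) (fun a b c v u => eq_refl)
            aarr (fun a => cid _) _ _ _); intros.
  - apply ah_comm.
  - now rewrite cid_left, cid_right.
  - apply cid_left.
Defined.

Definition rhoArr (E : Ff) (a : Arr) : Arr := @mkArr (E a) (acod a) (F_rho E a).
Definition lamArr (E : Ff) (a : Arr) : Arr := @mkArr (adom a) (E a) (F_lam E a).

Definition rhoAH (E : Ff) a b (u : ArrHom a b) : ArrHom (rhoArr E a) (rhoArr E b) :=
  @mkArrHom (rhoArr E a) (rhoArr E b) (F_mor E u) (ah_bot u) (F_rho_nat E u).
Definition lamAH (E : Ff) a b (u : ArrHom a b) : ArrHom (lamArr E a) (lamArr E b) :=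
  @mkArrHom (lamArr E a) (lamArr E b) (ah_top u) (F_mor E u) (F_lam_nat E u).

Lemma rhoAH_id E a : rhoAH E (arrh_id a) = arrh_id (rhoArr E a).
Proof. apply ArrHom_eq; simpl; [apply F_id | reflexivity]. Qed.
Lemma rhoAH_comp E a b c (v : ArrHom b c) (u : ArrHom a b) :
  rhoAH E (arrh_comp v u) = arrh_comp (rhoAH E v) (rhoAH E u).
Proof. apply ArrHom_eq; simpl; [apply F_comp | reflexivity]. Qed.
Lemma lamAH_id E a : lamAH E (arrh_id a) = arrh_id (lamArr E a).
Proof. apply ArrHom_eq; simpl; [reflexivity | apply F_id]. Qed.
Lemma lamAH_comp E a b c (v : ArrHom b c) (u : ArrHom a b) :
  lamAH E (arrh_comp v u) = arrh_comp (lamAH E v) (lamAH E u).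
Proof. apply ArrHom_eq; simpl; [reflexivity | apply F_comp]. Qed.

(* E' (x) E : factors f as X --lambda'_{rho_f} lambda_f--> E'(rho_f) --rho'_{rho_f}--> Y *)
Definition fftens (E' E : Ff) : Ff.
Proof.
  refine (@mkFf (fun a => E' (rhoArr E a))
                (fun a b u => F_mor E' (rhoAH E u)) _ _
                (fun a => ccomp (F_lam E' (rhoArr E a)) (F_lam E a))
                (fun a => F_rho E' (rhoArr E a)) _ _ _); intros.
  - rewrite rhoAH_id; apply F_id.
  - rewrite rhoAH_comp; apply F_comp.
  - pose proof (F_lam_nat E' (rhoAH E u)) as H; simpl in H |- *.
    rewrite (ccomp_assoc (F_mor E' _)), <- H, <- !ccomp_assoc, <- F_lam_nat.
    reflexivity.
  - exact (F_rho_nat E' (rhoAH E u)).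
  - pose proof (F_rho_lam E' (rhoArr E a)) as H; simpl in H |- *.
    rewrite ccomp_assoc, H; apply F_rho_lam.
Defined.

(* E' (.) E : factors f as X --lambda'_{lambda_f}--> E'(lambda_f) --rho_f rho'_{lambda_f}--> Y *)
Definition ffdot (E' E : Ff) : Ff.
Proof.
  refine (@mkFf (fun a => E' (lamArr E a))
                (fun a b u => F_mor E' (lamAH E u)) _ _
                (fun a => F_lam E' (lamArr E a))
                (fun a => ccomp (F_rho E a) (F_rho E' (lamArr E a))) _ _ _); intros.
  - rewrite lamAH_id; apply F_id.
  - rewrite lamAH_comp; apply F_comp.
  - exact (F_lam_nat E' (lamAH E u)).
  - pose proof (F_rho_nat E' (lamAH E u)) as H; simpl in H |- *.
    rewrite <- (ccomp_assoc (F_rho E b)), H, ccomp_assoc, F_rho_nat, ccomp_assoc.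
    reflexivity.
  - pose proof (F_rho_lam E' (lamArr E a)) as H; simpl in H |- *.
    rewrite <- ccomp_assoc, H; apply F_rho_lam.
Defined.

Definition alphaRhoAH (E F : Ff) (al : FfHom E F) (a : Arr)
  : ArrHom (rhoArr E a) (rhoArr F a).
Proof.
  refine (@mkArrHom (rhoArr E a) (rhoArr F a) (al a) (cid _) _); simpl.
  now rewrite fh_rho, cid_left.
Defined.

Definition alphaLamAH (E F : Ff) (al : FfHom E F) (a : Arr)
  : ArrHom (lamArr E a) (lamArr F a).
Proof.
  refine (@mkArrHom (lamArr E a) (lamArr F a) (cid _) (al a) _); simpl.
  now rewrite fh_lam, cid_right.
Defined.

Definition fftensh (E F E' F' : Ff) (be : FfHom E' F') (al : FfHom E F)
  : FfHom (fftens E' E) (fftens F' F).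
Proof.
  refine (@mkFfHom (fftens E' E) (fftens F' F)
            (fun a => ccomp (be (rhoArr F a)) (F_mor E' (alphaRhoAH al a))) _ _ _);
    intros; simpl.
  - rewrite <- ccomp_assoc, <- F_comp.
    assert (H : arrh_comp (alphaRhoAH al b) (rhoAH E u)
                = arrh_comp (rhoAH F u) (alphaRhoAH al a)).
    { apply ArrHom_eq; simpl; [apply fh_nat | now rewrite cid_left, cid_right]. }
    rewrite H, F_comp, ccomp_assoc, (fh_nat be (rhoAH F u)), <- ccomp_assoc.
    reflexivity.
  - pose proof (F_lam_nat E' (alphaRhoAH al a)) as H; simpl in H |- *.
    rewrite <- ccomp_assoc, (ccomp_assoc (F_mor E' _)), <- H.
    rewrite <- ccomp_assoc, (fh_lam al), ccomp_assoc.
    pose proof (fh_lam be (rhoArr F a)) as H'; simpl in H'; rewrite H'.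
    reflexivity.
  - pose proof (F_rho_nat E' (alphaRhoAH al a)) as H; simpl in H.
    pose proof (fh_rho be (rhoArr F a)) as H'; simpl in H'.
    rewrite ccomp_assoc, H', H; apply cid_left.
Defined.

Definition ffdoth (E F E' F' : Ff) (be : FfHom E' F') (al : FfHom E F)
  : FfHom (ffdot E' E) (ffdot F' F).
Proof.
  refine (@mkFfHom (ffdot E' E) (ffdot F' F)
            (fun a => ccomp (be (lamArr F a)) (F_mor E' (alphaLamAH al a))) _ _ _);
    intros; simpl.
  - rewrite <- ccomp_assoc, <- F_comp.
    assert (H : arrh_comp (alphaLamAH al b) (lamAH E u)
                = arrh_comp (lamAH F u) (alphaLamAH al a)).
    { apply ArrHom_eq; simpl; [now rewrite cid_left, cid_right | apply fh_nat]. }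
    rewrite H, F_comp, ccomp_assoc, (fh_nat be (lamAH F u)), <- ccomp_assoc.
    reflexivity.
  - pose proof (F_lam_nat E' (alphaLamAH al a)) as H; simpl in H.
    rewrite <- ccomp_assoc, <- H, cid_right; apply (fh_lam be (lamArr F a)).
  - pose proof (F_rho_nat E' (alphaLamAH al a)) as H; simpl in H.
    pose proof (fh_rho be (lamArr F a)) as H'; simpl in H'.
    assert (K : ccomp (F_rho F' (lamArr F a))
                  (ccomp (be (lamArr F a)) (F_mor E' (alphaLamAH al a)))
                = ccomp (al a) (F_rho E' (lamArr E a)))
      by (rewrite ccomp_assoc; simpl; rewrite H', H; reflexivity).
    simpl in K; rewrite <- ccomp_assoc, K, ccomp_assoc, fh_rho; reflexivity.
Defined.

End FunctorialFactorisations.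

Arguments ff_I {C}.
Arguments ff_bot {C}.
Arguments ffid {C} E.
Arguments hom_eq {C A B A' B'}.

(* The structure maps are as simple as they can be: m and c have identity components,
   j_f = f, and z_f = A(h, k) is the image under A of the map of C^2 with
   h = C'(1_X, λ^B_{ρ^D_f}) and k = B(ρ^{C'}_{λ^D_f}, 1_Y).  Both tensor products are strictly
   associative and unital, with equalities whose components are identities, so after
   transporting along them every coherence law becomes an equation between images of maps of
   C^2 under one factorisation; it then follows from functoriality of the factorisations and
   naturality of λ, ρ and of morphisms of Ff_C. *)

From Stdlib Require Import ProofIrrelevance FunctionalExtensionality.

Set Implicit Arguments.
Unset Strict Implicit.

Section Interchange.
Variable C : Category.

Lemma FfHom_ext (E E' : Ff C) (f g : FfHom E E') : (forall a, f a = g a) -> f = g.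
Proof.
  destruct f as [f nf lf rf], g as [g ng lg rg]; simpl; intros fg.
  assert (f = g) as <- by (apply functional_extensionality_dep; exact fg).
  f_equal; apply proof_irrelevance.
Qed.

Lemma Ff_ext (O : Arr C -> Obj C) M1 M2 i1 i2 c1 c2 l1 l2 r1 r2 ln1 ln2 rn1 rn2 rl1 rl2 :
  (forall a b u, M1 a b u = M2 a b u) -> (forall a, l1 a = l2 a) -> (forall a, r1 a = r2 a) ->
  @mkFf C O M1 i1 c1 l1 r1 ln1 rn1 rl1 = @mkFf C O M2 i2 c2 l2 r2 ln2 rn2 rl2.
Proof.
  intros HM Hl Hr.
  assert (M1 = M2) as <-.
  { do 3 (apply functional_extensionality_dep; intro); apply HM. }
  assert (l1 = l2) as <- by (apply functional_extensionality_dep; exact Hl).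
  assert (r1 = r2) as <- by (apply functional_extensionality_dep; exact Hr).
  f_equal; apply proof_irrelevance.
Qed.

Lemma F_mor_congr (E : Ff C) a b (u v : ArrHom a b) :
  ah_top u = ah_top v -> ah_bot u = ah_bot v -> F_mor E u = F_mor E v.
Proof. intros t b'; now rewrite (ArrHom_eq t b'). Qed.

Lemma F_compA (E : Ff C) a b c (v : ArrHom b c) (u : ArrHom a b) X (r : Hom X (E a)) :
  ccomp (F_mor E v) (ccomp (F_mor E u) r) = ccomp (F_mor E (arrh_comp v u)) r.
Proof. now rewrite F_comp, ccomp_assoc. Qed.

Lemma fftensA (A B D : Ff C) : fftens (fftens A B) D = fftens A (fftens B D).
Proof.
  apply Ff_ext; intros; simpl.
  - now apply F_mor_congr.
  - symmetry; apply ccomp_assoc.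
  - reflexivity.
Qed.

Lemma ffdotA (A B D : Ff C) : ffdot (ffdot A B) D = ffdot A (ffdot B D).
Proof.
  apply Ff_ext; intros; simpl.
  - now apply F_mor_congr.
  - reflexivity.
  - apply ccomp_assoc.
Qed.

Lemma fftens1l (A : Ff C) : fftens ff_I A = A.
Proof. apply Ff_ext; intros; simpl; [reflexivity | apply cid_left | reflexivity]. Qed.

Lemma fftens1r (A : Ff C) : fftens A ff_I = A.
Proof.
  apply Ff_ext; intros; simpl.
  - now apply F_mor_congr.
  - apply cid_right.
  - reflexivity.
Qed.

Lemma ffdot1l (A : Ff C) : ffdot ff_bot A = A.
Proof. apply Ff_ext; intros; simpl; [reflexivity | reflexivity | apply cid_right]. Qed.

Lemma ffdot1r (A : Ff C) : ffdot A ff_bot = A.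
Proof.
  apply Ff_ext; intros; simpl.
  - now apply F_mor_congr.
  - reflexivity.
  - apply cid_left.
Qed.

Definition obj_cast (X Y : Obj C) (p : X = Y) : Hom X Y :=
  match p in _ = Z return Hom X Z with eq_refl => cid X end.

Lemma obj_cast_refl (X : Obj C) (p : X = X) : obj_cast p = cid X.
Proof. now rewrite (proof_irrelevance _ p eq_refl). Qed.

Definition ffcast (E E' : Ff C) (e : E = E') : FfHom E E' :=
  match e in _ = Z return FfHom E Z with eq_refl => ffid E end.

Lemma ffcastE (E E' : Ff C) (e : E = E') a :
  ffcast e a = obj_cast (f_equal (fun X => F_obj X a) e).
Proof. now destruct e. Qed.

Lemma hom_eq_intro (A B A' B' : Ff C) (f : FfHom A B) (g : FfHom A' B')
  (eA : A = A') (eB : B = B') :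
  (forall a, ccomp (ffcast eB a) (f a) = ccomp (g a) (ffcast eA a)) -> hom_eq f g.
Proof.
  intros fg. exists eA, eB. destruct eA, eB; apply FfHom_ext; intro a.
  specialize (fg a); simpl in fg |- *.
  now rewrite cid_left, cid_right in fg.
Qed.

Lemma alphaRhoAH_id (E : Ff C) a : alphaRhoAH (ffid E) a = arrh_id _.
Proof. now apply ArrHom_eq. Qed.

Lemma alphaLamAH_id (E : Ff C) a : alphaLamAH (ffid E) a = arrh_id _.
Proof. now apply ArrHom_eq. Qed.

Lemma fftensh_id (A B : Ff C) : fftensh (ffid A) (ffid B) = ffid (fftens A B).
Proof.
  apply FfHom_ext; intro a; simpl. rewrite alphaRhoAH_id, F_id. apply cid_left.
Qed.

Lemma ffdoth_id (A B : Ff C) : ffdoth (ffid A) (ffid B) = ffid (ffdot A B).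
Proof.
  apply FfHom_ext; intro a; simpl. rewrite alphaLamAH_id, F_id. apply cid_left.
Qed.

Lemma ffcast_tens (A A' B B' : Ff C) (eA : A = A') (eB : B = B') :
  ffcast (f_equal2 (@fftens C) eA eB) = fftensh (ffcast eA) (ffcast eB).
Proof.
  (* [f_equal2] is opaque, so [f_equal2 _ eq_refl eq_refl] does not reduce to [eq_refl]. *)
  destruct eA, eB; rewrite (proof_irrelevance _ _ eq_refl).
  exact (eq_sym (fftensh_id A B)).
Qed.

Lemma ffcast_dot (A A' B B' : Ff C) (eA : A = A') (eB : B = B') :
  ffcast (f_equal2 (@ffdot C) eA eB) = ffdoth (ffcast eA) (ffcast eB).
Proof.
  destruct eA, eB; rewrite (proof_irrelevance _ _ eq_refl).
  exact (eq_sym (ffdoth_id A B)).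
Qed.

(* The implicit object arguments of [ccomp] in a goal are often only convertible to those of a
   lemma (e.g. [fftens A B a] and [A (rhoArr B a)]), which defeats [rewrite]; the following
   tactics rewrite modulo conversion. *)
Ltac replace_conv S T prf :=
  let s := fresh "s" in let H := fresh "H" in
  set (s := S); assert (H : s = T) by (subst s; prf); rewrite H; clear H; try clear s.

Ltac conv_rewrite e :=
  lazymatch type of e with ?L = ?R =>
    match goal with |- context [?S] =>
      lazymatch S with ccomp _ _ => unify S L; replace_conv S R ltac:(exact e) end
    end
  end; simpl.

Ltac assoc_r := repeat rewrite <- ccomp_assoc.

Ltac fuse := match goal with |- context [?S] =>
  match S with
  | ccomp (F_mor ?E ?v) (ccomp (F_mor ?E ?u) ?r) =>
      replace_conv S (ccomp (F_mor E (arrh_comp v u)) r) ltac:(apply F_compA)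
  | ccomp (F_mor ?E ?v) (F_mor ?E ?u) =>
      replace_conv S (F_mor E (arrh_comp v u)) ltac:(symmetry; apply F_comp)
  end end.

(* The strict equalities [fftensA], ..., [ffdot1r] have convertible components, so casts along
   them are identities by [obj_cast_refl]. *)
Ltac simpl_ids :=
  rewrite ?ffcastE, ?obj_cast_refl, ?alphaRhoAH_id, ?lamAH_id, ?rhoAH_id;
  assoc_r; rewrite ?cid_left, ?cid_right.

Ltac congr_arr := repeat fuse; f_equal; apply ArrHom_eq; simpl; simpl_ids.

Ltac naturality := first [ rewrite ?cid_left, ?cid_right; reflexivity |
  match goal with
  | |- ccomp (F_rho ?E _) (F_mor ?E ?u) = _ => exact (F_rho_nat E u)
  | |- _ = ccomp (F_mor ?E ?u) (F_lam ?E _) => exact (F_lam_nat E u)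
  | |- ccomp (F_mor ?E ?u) (F_lam ?E _) = _ => exact (eq_sym (F_lam_nat E u))
  | |- _ = ccomp (F_rho ?E _) (F_mor ?E ?u) => exact (eq_sym (F_rho_nat E u))
  end ].

Ltac F_mor_trivial := match goal with |- _ = cid _ => repeat fuse;
  match goal with |- @F_mor _ ?E ?a _ ?w = _ =>
    transitivity (F_mor E (arrh_id a)); [| exact (F_id E a)] end end.

(* Fuse each side into the image of a single map of C^2, compare components, and recurse. *)
Ltac arr_solve := repeat first [ reflexivity | naturality | congr_arr | F_mor_trivial ].

Ltac hom_eq_by eA eB :=
  apply (hom_eq_intro (eA := eA) (eB := eB)); intro;
  rewrite ?ffcast_tens, ?ffcast_dot; simpl; simpl_ids; arr_solve.

Definition lam_tensAH (B D : Ff C) (f : Arr C) : ArrHom (lamArr D f) (lamArr (fftens B D) f).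
Proof.
  refine (@mkArrHom _ (lamArr D f) (lamArr (fftens B D) f) (cid _) (F_lam B (rhoArr D f)) _).
  apply cid_right.
Defined.

Definition rho_dotAH (C' D : Ff C) (f : Arr C) : ArrHom (rhoArr (ffdot C' D) f) (rhoArr D f).
Proof.
  refine (@mkArrHom _ (rhoArr (ffdot C' D) f) (rhoArr D f) (F_rho C' (lamArr D f)) (cid _) _).
  symmetry; apply cid_left.
Defined.

Definition interchangeAH (B C' D : Ff C) (f : Arr C)
  : ArrHom (lamArr B (rhoArr (ffdot C' D) f)) (rhoArr C' (lamArr (fftens B D) f)).
Proof.
  refine (@mkArrHom _ (lamArr B (rhoArr (ffdot C' D) f)) (rhoArr C' (lamArr (fftens B D) f))
            (F_mor C' (lam_tensAH B D f)) (F_mor B (rho_dotAH C' D f)) _).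
  exact (eq_trans (F_rho_nat C' (lam_tensAH B D f)) (F_lam_nat B (rho_dotAH C' D f))).
Defined.

Definition interchange (A B C' D : Ff C)
  : FfHom (fftens (ffdot A B) (ffdot C' D)) (ffdot (fftens A C') (fftens B D)).
Proof.
  refine (@mkFfHom _ (fftens (ffdot A B) (ffdot C' D)) (ffdot (fftens A C') (fftens B D))
            (fun f => F_mor A (interchangeAH B C' D f)) _ _ _); intros; simpl.
  - congr_arr; congr_arr; naturality.
  - rewrite ccomp_assoc. conv_rewrite (eq_sym (F_lam_nat A (interchangeAH B C' D a))).
    rewrite <- ccomp_assoc. conv_rewrite (eq_sym (F_lam_nat C' (lam_tensAH B D a))).
    now rewrite cid_right.
  - rewrite <- ccomp_assoc. conv_rewrite (F_rho_nat A (interchangeAH B C' D a)).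
    rewrite ccomp_assoc. conv_rewrite (F_rho_nat B (rho_dotAH C' D a)).
    now rewrite cid_left.
Defined.

Definition bot_mul : FfHom (fftens (@ff_bot C) ff_bot) ff_bot.
Proof.
  refine (@mkFfHom _ (fftens ff_bot ff_bot) ff_bot (fun a => cid (acod a)) _ _ _);
    intros; simpl; now rewrite ?cid_left, ?cid_right.
Defined.

Definition unit_comul : FfHom (@ff_I C) (ffdot ff_I ff_I).
Proof.
  refine (@mkFfHom _ ff_I (ffdot ff_I ff_I) (fun a => cid (adom a)) _ _ _);
    intros; simpl; now rewrite ?cid_left, ?cid_right.
Defined.

Definition unit_to_bot : FfHom (@ff_I C) ff_bot.
Proof.
  refine (@mkFfHom _ ff_I ff_bot (@aarr C) _ _ _); intros; simpl.
  - apply ah_comm.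
  - apply cid_right.
  - apply cid_left.
Defined.

Lemma bot_mulA : hom_eq (ffcomp bot_mul (fftensh bot_mul (ffid ff_bot)))
                        (ffcomp bot_mul (fftensh (ffid ff_bot) bot_mul)).
Proof. hom_eq_by (fftensA ff_bot ff_bot ff_bot) (eq_refl (@ff_bot C)). Qed.

Lemma bot_mul1l : hom_eq (ffcomp bot_mul (fftensh unit_to_bot (ffid ff_bot))) (ffid ff_bot).
Proof. hom_eq_by (fftens1l ff_bot) (eq_refl (@ff_bot C)). Qed.

Lemma bot_mul1r : hom_eq (ffcomp bot_mul (fftensh (ffid ff_bot) unit_to_bot)) (ffid ff_bot).
Proof. hom_eq_by (fftens1r ff_bot) (eq_refl (@ff_bot C)). Qed.

Lemma unit_comulA : hom_eq (ffcomp (ffdoth unit_comul (ffid ff_I)) unit_comul)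
                           (ffcomp (ffdoth (ffid ff_I) unit_comul) unit_comul).
Proof. hom_eq_by (eq_refl (@ff_I C)) (ffdotA ff_I ff_I ff_I). Qed.

Lemma unit_comul1l : hom_eq (ffcomp (ffdoth unit_to_bot (ffid ff_I)) unit_comul) (ffid ff_I).
Proof. hom_eq_by (eq_refl (@ff_I C)) (ffdot1l ff_I). Qed.

Lemma unit_comul1r : hom_eq (ffcomp (ffdoth (ffid ff_I) unit_to_bot) unit_comul) (ffid ff_I).
Proof. hom_eq_by (eq_refl (@ff_I C)) (ffdot1r ff_I). Qed.

Lemma interchange_natural (A B C' D A' B' C'' D' : Ff C)
  (a : FfHom A A') (b : FfHom B B') (c : FfHom C' C'') (d : FfHom D D') :
  ffcomp (interchange A' B' C'' D') (fftensh (ffdoth a b) (ffdoth c d))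
  = ffcomp (ffdoth (fftensh a c) (fftensh b d)) (interchange A B C' D).
Proof.
  apply FfHom_ext; intro f; simpl.
  assoc_r. rewrite ccomp_assoc. conv_rewrite (eq_sym (fh_nat a (interchangeAH B' C'' D' f))).
  assoc_r. f_equal. congr_arr.
  - rewrite ccomp_assoc. conv_rewrite (eq_sym (fh_nat c (lam_tensAH B' D' f))).
    assoc_r. f_equal. congr_arr; [reflexivity |].
    assoc_r. conv_rewrite (eq_sym (F_lam_nat B (alphaRhoAH d f))).
    rewrite ccomp_assoc. conv_rewrite (fh_lam b (rhoArr D' f)). reflexivity.
  - rewrite ccomp_assoc. conv_rewrite (eq_sym (fh_nat b (rho_dotAH C'' D' f))).
    assoc_r. f_equal. congr_arr; [| reflexivity].
    rewrite ccomp_assoc. conv_rewrite (fh_rho c (lamArr D' f)).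
    conv_rewrite (F_rho_nat C' (alphaLamAH d f)). reflexivity.
Qed.

Lemma interchange_dotA (A B C' A' B' C'' : Ff C) :
  hom_eq (ffcomp (ffdoth (interchange A B A' B') (ffid (fftens C' C'')))
                 (interchange (ffdot A B) C' (ffdot A' B') C''))
         (ffcomp (ffdoth (ffid (fftens A A')) (interchange B C' B' C''))
                 (interchange A (ffdot B C') A' (ffdot B' C''))).
Proof.
  hom_eq_by (f_equal2 (@fftens C) (ffdotA A B C') (ffdotA A' B' C''))
            (ffdotA (fftens A A') (fftens B B') (fftens C' C'')).
Qed.

Lemma interchange_tensA (A A' B B' C' C'' : Ff C) :
  hom_eq (ffcomp (interchange (fftens A B) (fftens A' B') C' C'')
                 (fftensh (interchange A A' B B') (ffid (ffdot C' C''))))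
         (ffcomp (interchange A A' (fftens B C') (fftens B' C''))
                 (fftensh (ffid (ffdot A A')) (interchange B B' C' C''))).
Proof.
  hom_eq_by (fftensA (ffdot A A') (ffdot B B') (ffdot C' C''))
            (f_equal2 (@ffdot C) (fftensA A B C') (fftensA A' B' C'')).
Qed.

Lemma interchange_tens1r (A B : Ff C) :
  hom_eq (ffcomp (interchange A B ff_I ff_I) (fftensh (ffid (ffdot A B)) unit_comul))
         (ffid (ffdot A B)).
Proof. hom_eq_by (fftens1r (ffdot A B)) (f_equal2 (@ffdot C) (fftens1r A) (fftens1r B)). Qed.

Lemma interchange_tens1l (A B : Ff C) :
  hom_eq (ffcomp (interchange ff_I ff_I A B) (fftensh unit_comul (ffid (ffdot A B))))
         (ffid (ffdot A B)).
Proof. hom_eq_by (fftens1l (ffdot A B)) (f_equal2 (@ffdot C) (fftens1l A) (fftens1l B)). Qed.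

Lemma interchange_dot1l (A B : Ff C) :
  hom_eq (ffcomp (ffdoth bot_mul (ffid (fftens A B))) (interchange ff_bot A ff_bot B))
         (ffid (fftens A B)).
Proof. hom_eq_by (f_equal2 (@fftens C) (ffdot1l A) (ffdot1l B)) (ffdot1l (fftens A B)). Qed.

Lemma interchange_dot1r (A B : Ff C) :
  hom_eq (ffcomp (ffdoth (ffid (fftens A B)) bot_mul) (interchange A ff_bot B ff_bot))
         (ffid (fftens A B)).
Proof. hom_eq_by (f_equal2 (@fftens C) (ffdot1r A) (ffdot1r B)) (ffdot1r (fftens A B)). Qed.

End Interchange.

Theorem proposition3p6 (C : Category) :
  exists (m : FfHom (fftens (@ff_bot C) ff_bot) ff_bot)
         (c : FfHom (@ff_I C) (ffdot ff_I ff_I))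
         (j : FfHom (@ff_I C) ff_bot)
         (z : forall A B C' D : Ff C,
               FfHom (fftens (ffdot A B) (ffdot C' D))
                     (ffdot (fftens A C') (fftens B D))),
    (* (⊥, j, m) is a ⊗-monoid *)
    hom_eq (ffcomp m (fftensh m (ffid ff_bot)))
           (ffcomp m (fftensh (ffid ff_bot) m)) /\
    hom_eq (ffcomp m (fftensh j (ffid ff_bot))) (ffid ff_bot) /\
    hom_eq (ffcomp m (fftensh (ffid ff_bot) j)) (ffid ff_bot) /\
    (* (I, j, c) is a ⊙-comonoid *)
    hom_eq (ffcomp (ffdoth c (ffid ff_I)) c)
           (ffcomp (ffdoth (ffid ff_I) c) c) /\
    hom_eq (ffcomp (ffdoth j (ffid ff_I)) c) (ffid ff_I) /\
    hom_eq (ffcomp (ffdoth (ffid ff_I) j) c) (ffid ff_I) /\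
    (* naturality of z *)
    (forall (A B C' D A' B' C'' D' : Ff C)
            (a : FfHom A A') (b : FfHom B B') (c' : FfHom C' C'') (d : FfHom D D'),
        ffcomp (z A' B' C'' D') (fftensh (ffdoth a b) (ffdoth c' d))
        = ffcomp (ffdoth (fftensh a c') (fftensh b d)) (z A B C' D)) /\
    (* (A⊙B⊙C)⊗(A'⊙B'⊙C') -> (A⊗A')⊙(B⊗B')⊙(C⊗C') *)
    (forall A B C' A' B' C'' : Ff C,
        hom_eq (ffcomp (ffdoth (z A B A' B') (ffid (fftens C' C'')))
                       (z (ffdot A B) C' (ffdot A' B') C''))
               (ffcomp (ffdoth (ffid (fftens A A')) (z B C' B' C''))
                       (z A (ffdot B C') A' (ffdot B' C'')))) /\
    (* (A⊙A')⊗(B⊙B')⊗(C⊙C') -> (A⊗B⊗C)⊙(A'⊗B'⊗C') *)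
    (forall A A' B B' C' C'' : Ff C,
        hom_eq (ffcomp (z (fftens A B) (fftens A' B') C' C'')
                       (fftensh (z A A' B B') (ffid (ffdot C' C''))))
               (ffcomp (z A A' (fftens B C') (fftens B' C''))
                       (fftensh (ffid (ffdot A A')) (z B B' C' C'')))) /\
    (* (A⊙B)⊗I -> (A⊗I)⊙(B⊗I) *)
    (forall A B : Ff C,
        hom_eq (ffcomp (z A B ff_I ff_I) (fftensh (ffid (ffdot A B)) c))
               (ffid (ffdot A B))) /\
    (* I⊗(A⊙B) -> (I⊗A)⊙(I⊗B) *)
    (forall A B : Ff C,
        hom_eq (ffcomp (z ff_I ff_I A B) (fftensh c (ffid (ffdot A B))))
               (ffid (ffdot A B))) /\
    (* (⊥⊙A)⊗(⊥⊙B) -> ⊥⊙(A⊗B) *)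
    (forall A B : Ff C,
        hom_eq (ffcomp (ffdoth m (ffid (fftens A B))) (z ff_bot A ff_bot B))
               (ffid (fftens A B))) /\
    (* (A⊙⊥)⊗(B⊙⊥) -> (A⊗B)⊙⊥ *)
    (forall A B : Ff C,
        hom_eq (ffcomp (ffdoth (ffid (fftens A B)) m) (z A ff_bot B ff_bot))
               (ffid (fftens A B))).
Proof.
  exists (bot_mul C), (unit_comul C), (unit_to_bot C), (@interchange C).
  repeat split.
  - apply bot_mulA.
  - apply bot_mul1l.
  - apply bot_mul1r.
  - apply unit_comulA.
  - apply unit_comul1l.
  - apply unit_comul1r.
  - apply interchange_natural.
  - apply interchange_dotA.
  - apply interchange_tensA.
  - apply interchange_tens1r.
  - apply interchange_tens1l.
  - apply interchange_dot1l.
  - apply interchange_dot1r.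
Qed.
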